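(* Let $T$ be a unital endomorphism of $C^1[0,1]$ induced by the selfmap $\phi$ of $[0,1]$, i.e. $Tf=f\circ\phi$. Then $T$ is a Riesz operator if and only if $\bigcap_{n=0}^\infty\phi_n([0,1])=\{x_0\}$ for some $x_0\in[0,1]$ and $\phi'(x_0)=0$.
   Context: $C^1[0,1]$ is the Banach algebra of continuously differentiable functions on $[0,1]$ with norm $\|f\|_{C^1}=\|f\|_\infty+\|f'\|_\infty$. Unital endomorphisms of $C^1[0,1]$ are of the form $f\mapsto f\circ\phi$ for a selfmap $\phi$ of $[0,1]$ (necessarily $\phi\in C^1[0,1]$). $\phi_n$ denotes the $n$-th iterate of $\phi$ ($\phi_0$ the identity). A bounded operator $T$ is a Riesz operator if $\lim_{n}\left[\inf\{\|T^n-K\|:K \text{ compact}\}\right]^{1/n}=0$. *)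

From Stdlib Require Import Reals Lra.
From Coquelicot Require Import Coquelicot.
Open Scope R_scope.

(* Functions are R -> R; only their values on [0,1] matter. *)
Definition in01 (x : R) : Prop := 0 <= x <= 1.

Definition has_deriv01 (f : R -> R) (x d : R) : Prop :=
  forall eps, 0 < eps -> exists delta, 0 < delta /\
    forall y, in01 y -> y <> x -> Rabs (y - x) < delta ->
      Rabs ((f y - f x) / (y - x) - d) < eps.

Definition cont01 (g : R -> R) (x : R) : Prop :=
  forall eps, 0 < eps -> exists delta, 0 < delta /\
    forall y, in01 y -> Rabs (y - x) < delta -> Rabs (g y - g x) < eps.

Definition isC1 (f : R -> R) : Prop :=
  exists g : R -> R, (forall x, in01 x -> has_deriv01 f x (g x)) /\
                     (forall x, in01 x -> cont01 g x).

Definition supnorm01 (f : R -> R) : R :=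
  real (Lub_Rbar (fun r => exists x, in01 x /\ r = Rabs (f x))).

(* ||f'||_inf on [0,1] (the derivative relative to [0,1] is unique) *)
Definition dsupnorm01 (f : R -> R) : R :=
  real (Lub_Rbar (fun r => exists x d, in01 x /\ has_deriv01 f x d /\ r = Rabs d)).

Definition c1norm (f : R -> R) : R := supnorm01 f + dsupnorm01 f.

Definition op := (R -> R) -> (R -> R).

Definition opnorm (L : op) : R :=
  real (Lub_Rbar (fun r => exists f, isC1 f /\ c1norm f <= 1 /\ r = c1norm (L f))).

Definition linear_C1 (K : op) : Prop :=
  (forall f, isC1 f -> isC1 (K f)) /\
  forall (a b : R) f g, isC1 f -> isC1 g -> forall x, in01 x ->
    K (fun y => a * f y + b * g y) x = a * K f x + b * K g x.

Definition compact_op (K : op) : Prop :=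
  linear_C1 K /\
  forall u : nat -> R -> R, (forall k, isC1 (u k) /\ c1norm (u k) <= 1) ->
    exists (s : nat -> nat) (g : R -> R),
      (forall k, (s k < s (S k))%nat) /\ isC1 g /\
      is_lim_seq (fun k => c1norm (fun x => K (u (s k)) x - g x)) 0.

Definition comp_op (phi : R -> R) : op := fun f x => f (phi x).
Definition op_pow (T : op) (n : nat) : op := fun f => Nat.iter n T f.
Definition op_sub (A B : op) : op := fun f x => A f x - B f x.

Definition ess_norm (A : op) : R :=
  real (Glb_Rbar (fun r => exists K, compact_op K /\ r = opnorm (op_sub A K))).

Definition nroot (x : R) (n : nat) : R :=
  match Rlt_dec 0 x with left _ => Rpower x (/ INR n) | right _ => 0 end.

Definition Riesz (T : op) : Prop :=
  is_lim_seq (fun n => nroot (ess_norm (op_pow T n)) n) 0.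

From Stdlib Require Import Reals Lra Lia Classical ClassicalEpsilon FunctionalExtensionality.
From Coquelicot Require Import Coquelicot.
Open Scope R_scope.

(** [T^n] is the composition operator with the iterate [phi_n], whose derivative is
    [D_n x = phi'(phi_(n-1) x) * ... * phi'(x)]. The essential norm of a composition
    operator [C_psi] is squeezed between [|psi'(xi)| / 8] (for every [xi]) and
    [2 sup |psi'|], so [T] is Riesz iff [sup |D_n|] decays faster than every geometric
    sequence. If the images [phi_n([0,1])] shrink to [{x0}] with [phi'(x0) = 0], the
    iterates enter uniformly the neighbourhoods of [x0] where [|phi'|] is small, which
    gives this decay. Otherwise take a fixed point [xs] of [phi]: either [phi'(xs) <> 0]
    and [D_n xs = phi'(xs)^n], or the images contain a second point [y], and the mean
    value theorem for [phi_n] forces [sup |D_n| >= |y - xs|]. *)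

(** * Continuity and derivatives relative to [0,1] *)

Lemma in01_between u v : in01 u -> in01 v -> forall c, Rmin u v <= c <= Rmax u v -> in01 c.
Proof. unfold in01, Rmin, Rmax; destruct Rle_dec; intros; lra. Qed.

Lemma in01_neighbour x d : in01 x -> 0 < d -> exists y, in01 y /\ y <> x /\ Rabs (y - x) < d.
Proof.
  unfold in01; intros Hx Hd. set (t := Rmin d 1 / 2).
  assert (0 < t < d /\ t <= 1/2) by (unfold t, Rmin; destruct Rle_dec; lra).
  destruct (Rle_dec x (1/2)); [exists (x + t) | exists (x - t)];
    (split; [lra | split; [lra | split_Rabs; lra]]).
Qed.

(** Extending a function by [g (clamp t)] turns continuity relative to [0,1]
    into the global continuity of the standard library. *)
Definition clamp (x : R) : R := Rmax 0 (Rmin 1 x).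

Lemma clamp_in01 x : in01 (clamp x).
Proof. unfold in01, clamp, Rmax, Rmin; repeat destruct Rle_dec; lra. Qed.

Lemma clamp_id x : in01 x -> clamp x = x.
Proof. unfold in01, clamp, Rmax, Rmin; intros; repeat destruct Rle_dec; lra. Qed.

Lemma clamp_lipschitz x y : Rabs (clamp x - clamp y) <= Rabs (x - y).
Proof. unfold clamp, Rmax, Rmin; repeat destruct Rle_dec; split_Rabs; lra. Qed.

Lemma cont01_ext g h x :
  (forall y, in01 y -> g y = h y) -> in01 x -> cont01 g x -> cont01 h x.
Proof.
  intros He Hx H eps Heps. destruct (H eps Heps) as [d [Hd Hy]].
  exists d; split; auto. intros y Hy01 Hyx. rewrite <- !He by auto. auto.
Qed.

Lemma cont01_of_continuity_pt g x : continuity_pt g x -> cont01 g x.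
Proof.
  intros H eps Heps. destruct (H eps Heps) as [d [Hd Hy]]. exists d; split; [lra|].
  intros y _ Hyx. destruct (Req_dec y x) as [->|Hne].
  - rewrite Rminus_eq_0, Rabs_R0; lra.
  - apply (Hy y). split; [split; [exact I | auto] | exact Hyx].
Qed.

Lemma continuity_pt_clamp g x : cont01 g (clamp x) -> continuity_pt (fun t => g (clamp t)) x.
Proof.
  intros H eps Heps. destruct (H eps Heps) as [d [Hd Hy]]. exists d; split; [lra|].
  intros y [_ Hyx]. apply Hy; [apply clamp_in01|].
  eapply Rle_lt_trans; [apply clamp_lipschitz | exact Hyx].
Qed.

Lemma cont01_clamp_iff g x : in01 x -> cont01 g x <-> continuity_pt (fun t => g (clamp t)) x.
Proof.
  intros Hx; split.
  - intros H. apply continuity_pt_clamp. rewrite clamp_id; auto.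
  - intros H. apply cont01_of_continuity_pt in H.
    apply (cont01_ext (fun t => g (clamp t))); auto. intros y Hy. rewrite clamp_id; auto.
Qed.

Lemma cont01_const c x : cont01 (fun _ => c) x.
Proof. apply cont01_of_continuity_pt, continuity_pt_const. intros a b; reflexivity. Qed.

Lemma cont01_id x : cont01 (fun y => y) x.
Proof. apply cont01_of_continuity_pt, continuity_pt_id. Qed.

Lemma cont01_lincomb f g p q x :
  in01 x -> cont01 f x -> cont01 g x -> cont01 (fun t => p * f t + q * g t) x.
Proof.
  intros Hx. rewrite !cont01_clamp_iff by exact Hx. intros Hf Hg.
  apply continuity_pt_plus; apply continuity_pt_scal; auto.
Qed.

Lemma cont01_mult f g x : in01 x -> cont01 f x -> cont01 g x -> cont01 (fun t => f t * g t) x.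
Proof.
  intros Hx. rewrite !cont01_clamp_iff by exact Hx. apply continuity_pt_mult.
Qed.

Lemma cont01_comp psi f x : (forall y, in01 y -> in01 (psi y)) ->
  cont01 psi x -> cont01 f (psi x) -> cont01 (fun t => f (psi t)) x.
Proof.
  intros Hm Hpsi Hf eps Heps. destruct (Hf eps Heps) as [d1 [Hd1 H1]].
  destruct (Hpsi d1 Hd1) as [d2 [Hd2 H2]]. exists d2; split; auto.
Qed.

Lemma cont01_bounded g : (forall x, in01 x -> cont01 g x) ->
  exists B, 0 <= B /\ forall x, in01 x -> Rabs (g x) <= B.
Proof.
  intros H. assert (Hc : forall c, 0 <= c <= 1 -> continuity_pt (fun t => g (clamp t)) c)
    by (intros c Hc; apply cont01_clamp_iff, H; exact Hc).
  destruct (continuity_ab_maj _ 0 1 Rle_0_1 Hc) as [M [HM _]].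
  destruct (continuity_ab_min _ 0 1 Rle_0_1 Hc) as [m [Hm _]].
  pose proof (Rabs_pos (g (clamp M))). pose proof (Rabs_pos (g (clamp m))).
  exists (Rabs (g (clamp M)) + Rabs (g (clamp m))). split; [lra|].
  intros x Hx. specialize (HM x Hx). specialize (Hm x Hx). rewrite (clamp_id x Hx) in HM, Hm.
  split_Rabs; lra.
Qed.

Lemma intermediate_value01 h u v y : (forall x, in01 x -> cont01 h x) -> in01 u -> in01 v ->
  Rmin (h u) (h v) <= y <= Rmax (h u) (h v) ->
  exists c, in01 c /\ Rmin u v <= c <= Rmax u v /\ h c = y.
Proof.
  intros Hc Hu Hv Hy.
  destruct (IVT_gen (fun t => h (clamp t)) u v y) as [c [Hcb Hce]].
  { intros t. apply continuity_pt_clamp, Hc, clamp_in01. }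
  { rewrite !clamp_id by auto. exact Hy. }
  assert (Hc01 : in01 c) by exact (in01_between u v Hu Hv c Hcb).
  exists c. rewrite (clamp_id c Hc01) in Hce. auto.
Qed.

Lemma fixed_point01 phi : (forall x, in01 x -> in01 (phi x)) ->
  (forall x, in01 x -> cont01 phi x) -> exists x, in01 x /\ phi x = x.
Proof.
  intros Hm Hc. assert (H0 : in01 0) by (unfold in01; lra).
  assert (H1 : in01 1) by (unfold in01; lra).
  destruct (intermediate_value01 (fun x => 1 * phi x + (-1) * x) 0 1 0) as [x [Hx [_ Hfix]]]; auto.
  - intros x Hx. apply cont01_lincomb; auto using cont01_id.
  - pose proof (Hm 0 H0); pose proof (Hm 1 H1). unfold in01, Rmin, Rmax in *. destruct Rle_dec; lra.
  - exists x. split; auto. lra.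
Qed.

(** Carathéodory's formulation: [f] has derivative [d] at [x] iff the difference
    quotient, completed by [d] at [x], is continuous at [x]. *)
Definition slope (f : R -> R) (x d y : R) : R :=
  if Req_EM_T y x then d else (f y - f x) / (y - x).

Lemma has_deriv01_slope_iff f x d : has_deriv01 f x d <-> cont01 (slope f x d) x.
Proof.
  split; intros H eps Heps; destruct (H eps Heps) as [delta [Hdelta Hy]];
    exists delta; split; auto; unfold slope in *.
  - intros y Hy01 Hyx. destruct (Req_EM_T x x) as [_|]; [|congruence].
    destruct Req_EM_T as [->|Hne]; auto. replace (d - d) with 0 by ring. rewrite Rabs_R0; lra.
  - intros y Hy01 Hne Hyx. specialize (Hy y Hy01 Hyx).
    destruct (Req_EM_T x x) as [_|]; [|congruence]. destruct Req_EM_T; [congruence | exact Hy].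
Qed.

Lemma slope_spec f x d y : f y = f x + slope f x d y * (y - x).
Proof. unfold slope; destruct Req_EM_T as [->|]; [ring | field; lra]. Qed.

Lemma has_deriv01_cont01 f x d : in01 x -> has_deriv01 f x d -> cont01 f x.
Proof.
  intros Hx H. apply has_deriv01_slope_iff in H.
  apply (cont01_ext (fun y => 1 * f x + 1 * (slope f x d y * (y - x)))); auto.
  - intros y _. rewrite (slope_spec f x d y). ring.
  - apply cont01_lincomb, cont01_mult; auto using cont01_const.
    apply cont01_of_continuity_pt. reg.
Qed.

Lemma has_deriv01_unique f x d1 d2 : in01 x -> has_deriv01 f x d1 -> has_deriv01 f x d2 -> d1 = d2.
Proof.
  intros Hx H1 H2. apply NNPP; intro Hne.
  set (e := Rabs (d1 - d2) / 2).
  assert (He : 0 < e) by (unfold e; assert (0 < Rabs (d1 - d2)) by (apply Rabs_pos_lt; lra); lra).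
  destruct (H1 e He) as [a [Ha Hya]]. destruct (H2 e He) as [b [Hb Hyb]].
  destruct (in01_neighbour x (Rmin a b) Hx) as [y [Hy [Hyx Hd]]]; [apply Rmin_pos; auto|].
  apply Rmin_Rgt in Hd as [Hda Hdb].
  specialize (Hya y Hy Hyx Hda). specialize (Hyb y Hy Hyx Hdb).
  unfold e in *. split_Rabs; lra.
Qed.

Lemma has_deriv01_ext f h x d :
  (forall y, in01 y -> f y = h y) -> in01 x -> has_deriv01 f x d -> has_deriv01 h x d.
Proof.
  intros He Hx H eps Heps. destruct (H eps Heps) as [dl [Hdl Hy]]. exists dl. split; auto.
  intros y Hyi Hne Hyx. rewrite <- !He by auto. auto.
Qed.

Lemma has_deriv01_of_is_derive f x d : is_derive f x d -> has_deriv01 f x d.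
Proof.
  intros H. apply is_derive_Reals in H. intros eps Heps. destruct (H eps Heps) as [dl Hdl].
  exists dl. split; [apply cond_pos|]. intros y _ Hne Hyx.
  specialize (Hdl (y - x)). replace (x + (y - x)) with y in Hdl by ring. apply Hdl; auto. lra.
Qed.

Lemma has_deriv01_lincomb f g x a b p q : in01 x -> has_deriv01 f x a -> has_deriv01 g x b ->
  has_deriv01 (fun y => p * f y + q * g y) x (p * a + q * b).
Proof.
  rewrite !has_deriv01_slope_iff. intros Hx Hf Hg.
  apply (cont01_ext (fun y => p * slope f x a y + q * slope g x b y)); auto using cont01_lincomb.
  intros y _. unfold slope. destruct Req_EM_T; [ring | field; lra].
Qed.

Lemma has_deriv01_sub f g x a b : in01 x -> has_deriv01 f x a -> has_deriv01 g x b ->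
  has_deriv01 (fun y => f y - g y) x (a - b).
Proof.
  intros Hx Hf Hg. replace (a - b) with (1 * a + (-1) * b) by ring.
  apply (has_deriv01_ext (fun y => 1 * f y + (-1) * g y)); [intros; ring | auto|].
  apply has_deriv01_lincomb; auto.
Qed.

Lemma has_deriv01_comp psi f x a b : in01 x -> (forall y, in01 y -> in01 (psi y)) ->
  has_deriv01 psi x a -> has_deriv01 f (psi x) b ->
  has_deriv01 (fun y => f (psi y)) x (b * a).
Proof.
  intros Hx Hm Hpsi Hf. assert (Hcont : cont01 psi x) by exact (has_deriv01_cont01 _ _ _ Hx Hpsi).
  apply has_deriv01_slope_iff in Hpsi, Hf. apply has_deriv01_slope_iff.
  apply (cont01_ext (fun y => slope f (psi x) b (psi y) * slope psi x a y)); auto.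
  - intros y _. unfold slope.
    destruct (Req_EM_T y x) as [->|Hyx]; [destruct Req_EM_T; [ring | congruence]|].
    destruct (Req_EM_T (psi y) (psi x)) as [Hpy|Hpy].
    + rewrite Hpy. unfold Rdiv. ring.
    + field. split; lra.
  - apply cont01_mult; auto. apply cont01_comp; auto.
Qed.

Lemma isC1_ext f h : (forall y, in01 y -> f y = h y) -> isC1 f -> isC1 h.
Proof.
  intros He [df [Hd Hc]]. exists df. split; auto. intros x Hx. apply (has_deriv01_ext f); auto.
Qed.

Lemma isC1_lincomb f g p q : isC1 f -> isC1 g -> isC1 (fun y => p * f y + q * g y).
Proof.
  intros [df [Hf Hcf]] [dg [Hg Hcg]]. exists (fun y => p * df y + q * dg y).
  split; intros x Hx; [apply has_deriv01_lincomb | apply cont01_lincomb]; auto.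
Qed.

Lemma isC1_comp psi f : (forall y, in01 y -> in01 (psi y)) -> isC1 psi -> isC1 f ->
  isC1 (fun y => f (psi y)).
Proof.
  intros Hm [dpsi [Hpsi Hcpsi]] [df [Hf Hcf]]. exists (fun y => df (psi y) * dpsi y).
  split; intros x Hx.
  - apply has_deriv01_comp; auto.
  - apply cont01_mult; auto. apply cont01_comp; auto.
    apply (has_deriv01_cont01 psi x (dpsi x)); auto.
Qed.

Lemma isC1_of_is_derive f df : (forall x, is_derive f x (df x)) -> (forall x, continuity_pt df x) ->
  isC1 f.
Proof.
  intros Hd Hc. exists df. split; intros x _.
  - apply has_deriv01_of_is_derive; auto.
  - apply cont01_of_continuity_pt; auto.
Qed.

Lemma isC1_const c : isC1 (fun _ => c).
Proof.
  apply (isC1_of_is_derive _ (fun _ => 0)); intros x.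
  - auto_derive; auto.
  - apply continuity_pt_const. intros a b; reflexivity.
Qed.

Lemma is_derive_clamp_interior h x d : 0 < x < 1 -> has_deriv01 h x d ->
  is_derive (fun t => h (clamp t)) x d.
Proof.
  intros Hx H. apply is_derive_Reals. intros eps Heps.
  destruct (H eps Heps) as [dl [Hdl Hy]].
  assert (Hp : 0 < Rmin dl (Rmin x (1 - x))) by (repeat apply Rmin_pos; lra).
  exists (mkposreal _ Hp). intros k Hk Hkd. simpl in Hkd.
  apply Rmin_Rgt in Hkd as [Hk1 Hk2]. apply Rmin_Rgt in Hk2 as [Hk3 Hk4].
  assert (Hxk : in01 (x + k)) by (unfold in01; split_Rabs; lra).
  rewrite !clamp_id by (auto; unfold in01; lra).
  specialize (Hy (x + k) Hxk). replace (x + k - x) with k in Hy by ring. apply Hy; auto; lra.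
Qed.

Lemma mean_value01 h dh u v : (forall x, in01 x -> has_deriv01 h x (dh x)) -> in01 u -> in01 v ->
  exists c, in01 c /\ Rmin u v <= c <= Rmax u v /\ h v - h u = dh c * (v - u).
Proof.
  intros Hd Hu Hv.
  assert (Hin : forall c, Rmin u v <= c <= Rmax u v -> in01 c) by exact (in01_between u v Hu Hv).
  destruct (MVT_gen (fun t => h (clamp t)) u v dh) as [c [Hc He]].
  - intros x Hx. apply is_derive_clamp_interior.
    + unfold in01, Rmin, Rmax in *. destruct Rle_dec; lra.
    + apply Hd, Hin; lra.
  - intros x Hx. apply cont01_clamp_iff; [apply Hin; exact Hx|].
    apply (has_deriv01_cont01 h x (dh x)); apply Hin in Hx; auto.
  - exists c. rewrite !clamp_id in He by auto. auto.
Qed.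

Lemma mean_value_ineq01 h dh M u v : (forall x, in01 x -> has_deriv01 h x (dh x)) ->
  (forall x, in01 x -> Rabs (dh x) <= M) -> in01 u -> in01 v ->
  Rabs (h v - h u) <= M * Rabs (v - u).
Proof.
  intros Hd HM Hu Hv. destruct (mean_value01 h dh u v Hd Hu Hv) as [c [Hc [_ ->]]].
  rewrite Rabs_mult. apply Rmult_le_compat_r; [apply Rabs_pos | auto].
Qed.

(** * Norms *)

(** [0 <= B] covers the empty set, whose supremum [m_infty] is read as [0] by [real]. *)
Lemma real_Lub_Rbar_le (E : R -> Prop) B : 0 <= B -> (forall r, E r -> r <= B) ->
  real (Lub_Rbar E) <= B.
Proof.
  intros HB0 HB. destruct (Lub_Rbar_correct E) as [_ Hl].
  destruct (Lub_Rbar E) as [l| |]; simpl; auto; exact (Hl (Finite B) HB).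
Qed.

Lemma real_Lub_Rbar_ge (E : R -> Prop) B r : E r -> (forall r, E r -> r <= B) ->
  r <= real (Lub_Rbar E).
Proof.
  intros Hr HB. destruct (Lub_Rbar_correct E) as [Hub Hl].
  destruct (Lub_Rbar E) as [l| |]; simpl.
  - exact (Hub r Hr).
  - destruct (Hl (Finite B) HB).
  - destruct (Hub r Hr).
Qed.

Lemma real_Lub_Rbar_nonneg (E : R -> Prop) : (forall r, E r -> 0 <= r) -> 0 <= real (Lub_Rbar E).
Proof.
  intros H. destruct (Lub_Rbar_correct E) as [Hub Hl].
  destruct (Lub_Rbar E) as [l| |]; simpl; try lra.
  destruct (classic (exists r, E r)) as [[r Hr]|Hn].
  - specialize (Hub r Hr). specialize (H r Hr). simpl in Hub. lra.
  - destruct (Hl m_infty). intros r Hr. destruct Hn. eauto.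
Qed.

Lemma real_Glb_Rbar_bounds (E : R -> Prop) c e : E e -> (forall r, E r -> c <= r) ->
  c <= real (Glb_Rbar E) <= e.
Proof.
  intros He Hc. destruct (Glb_Rbar_correct E) as [Hlb Hg].
  destruct (Glb_Rbar E) as [l| |]; simpl.
  - split; [exact (Hg (Finite c) Hc) | exact (Hlb e He)].
  - destruct (Hlb e He).
  - destruct (Hg (Finite c) Hc).
Qed.

Lemma supnorm01_le f B : 0 <= B -> (forall x, in01 x -> Rabs (f x) <= B) -> supnorm01 f <= B.
Proof. intros H0 H. apply real_Lub_Rbar_le; auto. intros r [x [Hx ->]]. auto. Qed.

Lemma supnorm01_nonneg f : 0 <= supnorm01 f.
Proof. apply real_Lub_Rbar_nonneg. intros r [x [_ ->]]. apply Rabs_pos. Qed.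

Lemma supnorm01_ge f x : isC1 f -> in01 x -> Rabs (f x) <= supnorm01 f.
Proof.
  intros [df [Hd _]] Hx. destruct (cont01_bounded f) as [B [_ HB]].
  { intros y Hy. apply (has_deriv01_cont01 f y (df y)); auto. }
  apply (real_Lub_Rbar_ge _ B); [exists x; auto|]. intros r [y [Hy ->]]. auto.
Qed.

Lemma dsupnorm01_le f df B : 0 <= B -> (forall x, in01 x -> has_deriv01 f x (df x)) ->
  (forall x, in01 x -> Rabs (df x) <= B) -> dsupnorm01 f <= B.
Proof.
  intros H0 Hd HB. apply real_Lub_Rbar_le; auto. intros r [x [d [Hx [Hxd ->]]]].
  rewrite (has_deriv01_unique f x d (df x)); auto.
Qed.

Lemma dsupnorm01_nonneg f : 0 <= dsupnorm01 f.
Proof. apply real_Lub_Rbar_nonneg. intros r [x [d [_ [_ ->]]]]. apply Rabs_pos. Qed.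

Lemma dsupnorm01_ge f x d : isC1 f -> in01 x -> has_deriv01 f x d -> Rabs d <= dsupnorm01 f.
Proof.
  intros [df [Hd Hc]] Hx Hxd. destruct (cont01_bounded df Hc) as [B [_ HB]].
  apply (real_Lub_Rbar_ge _ B); [exists x, d; auto|].
  intros r [y [e [Hy [Hye ->]]]]. rewrite (has_deriv01_unique f y e (df y)); auto.
Qed.

Lemma c1norm_nonneg f : 0 <= c1norm f.
Proof. unfold c1norm. pose proof (supnorm01_nonneg f); pose proof (dsupnorm01_nonneg f); lra. Qed.

Lemma c1norm_ge_abs f x : isC1 f -> in01 x -> Rabs (f x) <= c1norm f.
Proof.
  intros Hf Hx. unfold c1norm.
  pose proof (supnorm01_ge f x Hf Hx); pose proof (dsupnorm01_nonneg f); lra.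
Qed.

Lemma c1norm_ge_deriv f x d : isC1 f -> in01 x -> has_deriv01 f x d -> Rabs d <= c1norm f.
Proof.
  intros Hf Hx Hd. unfold c1norm.
  pose proof (dsupnorm01_ge f x d Hf Hx Hd); pose proof (supnorm01_nonneg f); lra.
Qed.

Lemma c1norm_lincomb h a b p q : isC1 a -> isC1 b ->
  (forall x, in01 x -> h x = p * a x + q * b x) ->
  c1norm h <= Rabs p * c1norm a + Rabs q * c1norm b.
Proof.
  intros Ha Hb He. pose proof Ha as [da [Hda _]]. pose proof Hb as [db [Hdb _]].
  pose proof (Rabs_pos p). pose proof (Rabs_pos q).
  assert (Hsup : supnorm01 h <= Rabs p * supnorm01 a + Rabs q * supnorm01 b).
  { apply supnorm01_le; [pose proof (supnorm01_nonneg a); pose proof (supnorm01_nonneg b); nra|].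
    intros x Hx. rewrite He by auto. eapply Rle_trans; [apply Rabs_triang|]. rewrite !Rabs_mult.
    pose proof (supnorm01_ge a x Ha Hx); pose proof (supnorm01_ge b x Hb Hx).
    apply Rplus_le_compat; apply Rmult_le_compat_l; auto. }
  assert (Hdsup : dsupnorm01 h <= Rabs p * dsupnorm01 a + Rabs q * dsupnorm01 b).
  { apply (dsupnorm01_le h (fun x => p * da x + q * db x)).
    - pose proof (dsupnorm01_nonneg a); pose proof (dsupnorm01_nonneg b); nra.
    - intros x Hx. apply (has_deriv01_ext (fun y => p * a y + q * b y)); auto.
      + intros y Hy; symmetry; auto.
      + apply has_deriv01_lincomb; auto.
    - intros x Hx. eapply Rle_trans; [apply Rabs_triang|]. rewrite !Rabs_mult.
      pose proof (dsupnorm01_ge a x _ Ha Hx (Hda x Hx)).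
      pose proof (dsupnorm01_ge b x _ Hb Hx (Hdb x Hx)).
      apply Rplus_le_compat; apply Rmult_le_compat_l; auto. }
  unfold c1norm. lra.
Qed.

Lemma c1norm_const c : c1norm (fun _ => c) <= Rabs c.
Proof.
  unfold c1norm.
  assert (supnorm01 (fun _ => c) <= Rabs c) by (apply supnorm01_le; [apply Rabs_pos | intros; lra]).
  assert (dsupnorm01 (fun _ : R => c) <= 0).
  { apply (dsupnorm01_le _ (fun _ => 0)); [lra | | intros; rewrite Rabs_R0; lra].
    intros x _. apply has_deriv01_of_is_derive. auto_derive; auto. }
  lra.
Qed.

Lemma isC1_sub f g : isC1 f -> isC1 g -> isC1 (fun x => f x - g x).
Proof.
  intros Hf Hg. apply (isC1_ext (fun x => 1 * f x + (-1) * g x)); [intros; ring|].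
  apply isC1_lincomb; auto.
Qed.

Lemma c1norm_sub_le h a b : isC1 a -> isC1 b -> (forall x, in01 x -> h x = a x - b x) ->
  c1norm h <= c1norm a + c1norm b.
Proof.
  intros Ha Hb He. pose proof (c1norm_lincomb h a b 1 (Ropp 1) Ha Hb) as H.
  rewrite Rabs_R1, Rabs_Ropp, Rabs_R1, !Rmult_1_l in H. apply H.
  intros x Hx. rewrite He by exact Hx. ring.
Qed.

Lemma opnorm_le (L : op) B : 0 <= B ->
  (forall f, isC1 f -> c1norm f <= 1 -> c1norm (L f) <= B) -> opnorm L <= B.
Proof. intros H0 H. apply real_Lub_Rbar_le; auto. intros r [f [Hf [Hn ->]]]. auto. Qed.

Lemma opnorm_ge (L : op) B f : (forall f, isC1 f -> c1norm f <= 1 -> c1norm (L f) <= B) ->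
  isC1 f -> c1norm f <= 1 -> c1norm (L f) <= opnorm L.
Proof.
  intros H Hf Hn. apply (real_Lub_Rbar_ge _ B); [exists f; auto|].
  intros r [g [Hg [Hgn ->]]]. auto.
Qed.

Lemma opnorm_nonneg L : 0 <= opnorm L.
Proof. apply real_Lub_Rbar_nonneg. intros r [f [_ [_ ->]]]. apply c1norm_nonneg. Qed.

(** * Compact operators and the essential norm *)

Lemma compact_op_zero : compact_op (fun _ _ => 0).
Proof.
  split; [split|].
  - intros; apply isC1_const.
  - intros; ring.
  - intros u _. exists (fun k => k), (fun _ => 0).
    split; [intros; lia|]. split; [apply isC1_const|].
    apply (is_lim_seq_ext (fun _ => 0)); [|apply is_lim_seq_const].
    intros k. pose proof (c1norm_const (0 - 0)). pose proof (c1norm_nonneg (fun _ => 0 - 0)).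
    rewrite Rminus_0_r, Rabs_R0 in *. lra.
Qed.

Lemma ess_norm_le A K : compact_op K -> ess_norm A <= opnorm (op_sub A K).
Proof.
  intros HK. apply (real_Glb_Rbar_bounds _ 0); [exists K; auto|].
  intros r [K' [_ ->]]. apply opnorm_nonneg.
Qed.

Lemma ess_norm_ge A c : (forall K, compact_op K -> c <= opnorm (op_sub A K)) -> c <= ess_norm A.
Proof.
  intros H. apply (real_Glb_Rbar_bounds _ c (opnorm (op_sub A (fun _ _ => 0)))).
  - exists (fun _ _ => 0). split; auto using compact_op_zero.
  - intros r [K [HK ->]]. auto.
Qed.

Lemma ess_norm_nonneg A : 0 <= ess_norm A.
Proof. apply ess_norm_ge. intros; apply opnorm_nonneg. Qed.

Lemma subseq_ge (s : nat -> nat) : (forall k, (s k < s (S k))%nat) -> forall k, (k <= s k)%nat.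
Proof. intros Hs k. induction k; [lia|]. specialize (Hs k). lia. Qed.

Lemma compact_op_bounded K : compact_op K -> exists M,
  forall f, isC1 f -> c1norm f <= 1 -> c1norm (K f) <= M.
Proof.
  intros HK. apply NNPP. intros Hn.
  assert (Hex : forall n : nat, exists f, (isC1 f /\ c1norm f <= 1) /\ INR n < c1norm (K f)).
  { intros n. apply NNPP. intros Hn2. apply Hn. exists (INR n).
    intros f Hf Hf1. apply Rnot_lt_le. intros Hlt. apply Hn2. exists f. auto. }
  apply choice in Hex as [u Hu].
  destruct HK as [[HKC1 _] HK].
  destruct (HK u (fun k => proj1 (Hu k))) as [s [g [Hs [Hg Hlim]]]].
  apply is_lim_seq_spec in Hlim. destruct (Hlim (mkposreal 1 Rlt_0_1)) as [N HN].
  destruct (INR_archimed 1 (1 + c1norm g)) as [m Hm]; [lra|].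
  set (k := (N + m)%nat). specialize (HN k ltac:(unfold k; lia)). simpl in HN.
  rewrite Rminus_0_r, Rabs_pos_eq in HN by apply c1norm_nonneg.
  destruct (Hu (s k)) as [[Hus _] Hgt].
  assert (Hc : c1norm (K (u (s k))) <= Rabs 1 * c1norm (fun x => K (u (s k)) x - g x)
                                        + Rabs 1 * c1norm g).
  { apply c1norm_lincomb; [apply isC1_sub|..]; auto. intros; ring. }
  rewrite Rabs_R1 in Hc.
  assert (INR m <= INR (s k)) by (apply le_INR; pose proof (subseq_ge s Hs k); unfold k in *; lia).
  lra.
Qed.

Fixpoint nested_picks (pick : nat -> nat -> nat) (k : nat) : nat :=
  match k with O => pick O O | S k' => pick k (S (nested_picks pick k')) end.

Lemma bounded_seq_cv_subseq (u : nat -> R) M : (forall k, Rabs (u k) <= M) ->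
  exists s (l : R), (forall k, (s k < s (S k))%nat) /\ is_lim_seq (fun k => u (s k)) l.
Proof.
  intros Hu. destruct (Bolzano_Weierstrass u (fun c => -M <= c <= M) (compact_P3 (-M) M)) as [l Hl].
  { intros n. specialize (Hu n). split_Rabs; lra. }
  assert (Hstep : forall k N : nat, exists p, (N <= p)%nat /\ Rabs (u p - l) < / INR (S k)).
  { intros k N. assert (Hp : 0 < / INR (S k)) by (apply Rinv_0_lt_compat, lt_0_INR; lia).
    destruct (Hl (fun y => Rabs (y - l) < / INR (S k)) N) as [p [Hp1 Hp2]].
    - exists (mkposreal _ Hp). intros y Hy. exact Hy.
    - exists p; auto. }
  destruct (choice _ (fun k => choice _ (Hstep k))) as [pick Hpick].
  exists (nested_picks pick), l. split.
  - intros k. simpl. destruct (Hpick (S k) (S (nested_picks pick k))). lia.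
  - apply is_lim_seq_spec. intros eps. destruct (archimed_cor1 eps (cond_pos eps)) as [N [HN HN0]].
    exists N. intros k Hk.
    assert (Hk' : Rabs (u (nested_picks pick k) - l) < / INR (S k))
      by (destruct k; simpl; apply Hpick).
    assert (/ INR (S k) <= / INR N)
      by (apply Rinv_le_contravar; [apply lt_0_INR | apply le_INR]; lia).
    lra.
Qed.

Lemma compact_op_eval p : in01 p -> compact_op (fun f (_ : R) => f p).
Proof.
  intros Hp. split; [split|].
  - intros; apply isC1_const.
  - intros; reflexivity.
  - intros u Hu. destruct (bounded_seq_cv_subseq (fun k => u k p) 1) as [s [l [Hs Hl]]].
    { intros k. destruct (Hu k) as [Huk Hn]. pose proof (c1norm_ge_abs (u k) p Huk Hp). lra. }
    exists s, (fun _ => l). split; auto. split; [apply isC1_const|].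
    apply is_lim_seq_spec in Hl. apply is_lim_seq_spec. intros eps.
    destruct (Hl eps) as [N HN]. exists N. intros k Hk. specialize (HN k Hk).
    pose proof (c1norm_const (u (s k) p - l)). pose proof (c1norm_nonneg (fun _ => u (s k) p - l)).
    rewrite Rminus_0_r, Rabs_pos_eq by auto. lra.
Qed.

Lemma compact_op_close_pair K u : compact_op K -> (forall k, isC1 (u k) /\ c1norm (u k) <= 1) ->
  forall e J, 0 < e -> exists j k, (J <= j < k)%nat /\
    c1norm (fun x => K (u k) x - K (u j) x) < e.
Proof.
  intros [[HKC1 _] HK] Hu e J He. destruct (HK u Hu) as [s [g [Hs [Hg Hlim]]]].
  apply is_lim_seq_spec in Hlim. assert (He2 : 0 < e / 2) by lra.
  destruct (Hlim (mkposreal _ He2)) as [N HN]. simpl in HN.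
  assert (Hclose : forall m, (N <= m)%nat ->
    isC1 (fun x => K (u (s m)) x - g x) /\ c1norm (fun x => K (u (s m)) x - g x) < e / 2).
  { intros m Hm. split; [apply isC1_sub; auto; apply HKC1, Hu|].
    specialize (HN m Hm). rewrite Rminus_0_r, Rabs_pos_eq in HN by apply c1norm_nonneg. exact HN. }
  destruct (Hclose (N + J)%nat ltac:(lia)) as [Hj1 Hj2].
  destruct (Hclose (S (N + J)) ltac:(lia)) as [Hk1 Hk2].
  exists (s (N + J)%nat), (s (S (N + J))). split.
  - split; [pose proof (subseq_ge s Hs (N + J)); lia | apply Hs].
  - eapply Rle_lt_trans; [apply (c1norm_sub_le _ _ _ Hk1 Hj1); intros; ring | lra].
Qed.

Lemma linear_C1_sub K f g : linear_C1 K -> isC1 f -> isC1 g ->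
  forall x, in01 x -> K (fun y => f y - g y) x = K f x - K g x.
Proof.
  intros [_ HK] Hf Hg x Hx.
  replace (fun y => f y - g y) with (fun y => 1 * f y + (-1) * g y)
    by (apply functional_extensionality; intros; ring).
  rewrite HK by auto. ring.
Qed.

(** * Essential norm of composition operators *)

Lemma op_pow_comp_op phi n : op_pow (comp_op phi) n = comp_op (Nat.iter n phi).
Proof.
  unfold op_pow. apply functional_extensionality; intros f.
  induction n as [|n IH]; [reflexivity|]. simpl. rewrite IH.
  apply functional_extensionality; intros x. unfold comp_op. now rewrite <- Nat.iter_succ_r.
Qed.

Lemma c1norm_comp_le psi dpsi B f : (forall x, in01 x -> in01 (psi x)) ->
  (forall x, in01 x -> has_deriv01 psi x (dpsi x)) -> 0 <= B ->
  (forall x, in01 x -> Rabs (dpsi x) <= B) ->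
  isC1 f -> c1norm (fun x => f (psi x)) <= (1 + B) * c1norm f.
Proof.
  intros Hm Hd HB0 HB Hf. pose proof Hf as [df [Hdf _]]. pose proof (c1norm_nonneg f).
  assert (Hsup : supnorm01 (fun x => f (psi x)) <= c1norm f).
  { apply supnorm01_le; auto. intros x Hx. apply c1norm_ge_abs; auto. }
  assert (Hdsup : dsupnorm01 (fun x => f (psi x)) <= B * c1norm f).
  { apply (dsupnorm01_le _ (fun x => df (psi x) * dpsi x)); [nra| |].
    - intros x Hx. apply has_deriv01_comp; auto.
    - intros x Hx. rewrite Rabs_mult.
      pose proof (c1norm_ge_deriv f (psi x) _ Hf (Hm x Hx) (Hdf _ (Hm x Hx))).
      pose proof (HB x Hx). pose proof (Rabs_pos (df (psi x))). nra. }
  unfold c1norm at 1. lra.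
Qed.

(** Subtracting the rank-one operator [f |-> f (psi 0)] removes the sup-norm part. *)
Lemma ess_norm_comp_op_le psi dpsi B : (forall x, in01 x -> in01 (psi x)) ->
  (forall x, in01 x -> has_deriv01 psi x (dpsi x)) -> 0 <= B ->
  (forall x, in01 x -> Rabs (dpsi x) <= B) -> ess_norm (comp_op psi) <= 2 * B.
Proof.
  intros Hm Hd HB0 HB. assert (H0 : in01 0) by (unfold in01; lra).
  eapply Rle_trans; [apply (ess_norm_le _ (fun f _ => f (psi 0))), compact_op_eval; auto|].
  apply opnorm_le; [lra|]. intros f Hf Hf1. pose proof Hf as [df [Hdf _]].
  assert (Hderiv : forall x, in01 x -> has_deriv01 (fun y => f (psi y)) x (df (psi x) * dpsi x))
    by (intros; apply has_deriv01_comp; auto).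
  assert (Hbd : forall x, in01 x -> Rabs (df (psi x) * dpsi x) <= B).
  { intros x Hx. rewrite Rabs_mult.
    pose proof (c1norm_ge_deriv f (psi x) _ Hf (Hm x Hx) (Hdf _ (Hm x Hx))).
    pose proof (HB x Hx). pose proof (Rabs_pos (df (psi x))). nra. }
  unfold c1norm, op_sub, comp_op.
  assert (supnorm01 (fun x => f (psi x) - f (psi 0)) <= B).
  { apply supnorm01_le; auto. intros x Hx.
    pose proof (mean_value_ineq01 _ _ B 0 x Hderiv Hbd H0 Hx).
    assert (Rabs (x - 0) <= 1) by (unfold in01 in Hx; split_Rabs; lra). nra. }
  assert (dsupnorm01 (fun x => f (psi x) - f (psi 0)) <= B).
  { apply (dsupnorm01_le _ (fun x => df (psi x) * dpsi x - 0)); auto.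
    - intros x Hx. apply has_deriv01_sub; auto. apply has_deriv01_of_is_derive. auto_derive; auto.
    - intros x Hx. rewrite Rminus_0_r. auto. }
  lra.
Qed.

Lemma comp_op_sub_compact_bounded psi K : (forall x, in01 x -> in01 (psi x)) -> isC1 psi ->
  compact_op K ->
  exists B, forall f, isC1 f -> c1norm f <= 1 -> c1norm (op_sub (comp_op psi) K f) <= B.
Proof.
  intros Hm Hpsi HK. pose proof Hpsi as [dpsi [Hd Hc]].
  destruct (cont01_bounded dpsi Hc) as [Bp [HBp0 HBp]].
  destruct (compact_op_bounded K HK) as [M HM]. destruct HK as [[HKC1 _] _].
  exists ((1 + Bp) + M). intros f Hf Hf1.
  assert (Hcomp : isC1 (fun x => f (psi x))) by (apply isC1_comp; auto).
  eapply Rle_trans; [apply (c1norm_sub_le _ _ _ Hcomp (HKC1 f Hf)); intros; reflexivity|].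
  pose proof (c1norm_comp_le psi dpsi Bp f Hm Hd HBp0 HBp Hf). pose proof (HM f Hf Hf1). nra.
Qed.

Lemma image_interval_large_deriv psi dpsi xi :
  (forall x, in01 x -> has_deriv01 psi x (dpsi x)) -> (forall x, in01 x -> cont01 dpsi x) ->
  in01 xi -> dpsi xi <> 0 ->
  exists L, 0 < L /\ forall t, 0 <= t <= L ->
    exists x, in01 x /\ Rabs (psi x - psi xi) = t /\ Rabs (dpsi xi) / 2 < Rabs (dpsi x).
Proof.
  intros Hd Hc Hxi Hnz. set (d := Rabs (dpsi xi)).
  assert (Hdpos : 0 < d) by (apply Rabs_pos_lt; auto).
  destruct (Hc xi Hxi (d / 2)) as [eta [Heta Hnear]]; [lra|].
  destruct (in01_neighbour xi eta Hxi Heta) as [x1 [Hx1 [Hx1ne Hx1d]]].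
  assert (Hseg : forall c, Rmin xi x1 <= c <= Rmax xi x1 -> in01 c /\ d / 2 < Rabs (dpsi c)).
  { intros c Hcb. assert (Hc01 : in01 c) by exact (in01_between xi x1 Hxi Hx1 c Hcb).
    split; auto. rewrite Rmin_comm, Rmax_comm in Hcb.
    pose proof (Rabs_le_between_min_max x1 xi c Hcb).
    specialize (Hnear c Hc01 ltac:(lra)). unfold d in *. split_Rabs; lra. }
  exists (Rabs (psi x1 - psi xi)). split.
  { destruct (mean_value01 psi dpsi xi x1 Hd Hxi Hx1) as [c [_ [Hcb ->]]].
    rewrite Rabs_mult.
    apply Rmult_lt_0_compat; [destruct (Hseg c Hcb); lra | apply Rabs_pos_lt; lra]. }
  intros t Ht.
  set (y := if Rle_dec (psi xi) (psi x1) then psi xi + t else psi xi - t).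
  destruct (intermediate_value01 psi xi x1 y) as [c [Hc01 [Hcb Hcy]]]; auto.
  - intros x Hx. apply (has_deriv01_cont01 psi x (dpsi x)); auto.
  - unfold y, Rmin, Rmax. destruct Rle_dec; split_Rabs; lra.
  - exists c. split; auto. split; [|apply Hseg; auto].
    rewrite Hcy. unfold y. destruct Rle_dec; split_Rabs; lra.
Qed.

Definition wave (z : R) (k : nat) (y : R) : R := sin (2 ^ k * (y - z)) / (4 * 2 ^ k).
Definition dwave (z : R) (k : nat) (y : R) : R := cos (2 ^ k * (y - z)) / 4.

Lemma is_derive_wave z k y : is_derive (wave z k) y (dwave z k y).
Proof. unfold wave, dwave. auto_derive; auto. unfold Rminus. field. apply pow_nonzero; lra. Qed.

Lemma isC1_wave z k : isC1 (wave z k).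
Proof.
  apply (isC1_of_is_derive _ (dwave z k)); intros y; [apply is_derive_wave|].
  apply continuity_pt_filterlim, (ex_derive_continuous (dwave z k)).
  unfold dwave. auto_derive. auto.
Qed.

Lemma c1norm_wave z k : c1norm (wave z k) <= 1 / 2.
Proof.
  assert (H2 : 1 <= 2 ^ k) by (apply pow_R1_Rle; lra).
  assert (supnorm01 (wave z k) <= 1 / 4).
  { apply supnorm01_le; [lra|]. intros x _. unfold wave.
    rewrite Rabs_div, (Rabs_pos_eq (4 * 2 ^ k)) by lra.
    pose proof (SIN_bound (2 ^ k * (x - z))).
    apply (Rmult_le_reg_r (4 * 2 ^ k)); [lra|]. unfold Rdiv. rewrite Rmult_assoc, Rinv_l by lra.
    split_Rabs; nra. }
  assert (dsupnorm01 (wave z k) <= 1 / 4).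
  { apply (dsupnorm01_le _ (dwave z k));
      [lra | intros; apply has_deriv01_of_is_derive, is_derive_wave|].
    intros x _. unfold dwave. pose proof (COS_bound (2 ^ k * (x - z))). split_Rabs; lra. }
  unfold c1norm. lra.
Qed.

Lemma dwave_opposite z j k y : (j < k)%nat -> Rabs (y - z) = PI / 2 ^ j ->
  dwave z k y = 1 / 4 /\ dwave z j y = - 1 / 4.
Proof.
  intros Hjk Hy. assert (H2j : 2 ^ j <> 0) by (apply pow_nonzero; lra).
  assert (Hcos : forall m, cos (2 ^ m * (y - z)) = cos (2 ^ m * (PI / 2 ^ j))).
  { intros m. rewrite <- Hy. split_Rabs; [|reflexivity]. rewrite <- cos_neg. f_equal. ring. }
  unfold dwave. rewrite !Hcos. split.
  - replace (2 ^ k * (PI / 2 ^ j)) with (0 + 2 * INR (2 ^ (k - j - 1)) * PI).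
    + rewrite cos_period, cos_0. reflexivity.
    + rewrite pow_INR. replace (INR 2) with 2 by reflexivity.
      replace k with (S (k - j - 1) + j)%nat at 2 by lia. rewrite pow_add. simpl. field. exact H2j.
  - replace (2 ^ j * (PI / 2 ^ j)) with PI by (field; exact H2j). rewrite cos_PI. field.
Qed.

Lemma INR_le_pow2 n : INR n <= 2 ^ n.
Proof.
  induction n; [simpl; lra|]. rewrite S_INR. simpl.
  assert (1 <= 2 ^ n) by (apply pow_R1_Rle; lra). lra.
Qed.

Lemma PI_div_pow2_le L : 0 < L -> exists J, forall j, (J <= j)%nat -> 0 <= PI / 2 ^ j <= L.
Proof.
  intros HL. destruct (INR_archimed L PI HL) as [J HJ]. exists J. intros j Hj.
  assert (H2j : 0 < 2 ^ j) by (apply pow_lt; lra).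
  assert (INR J <= 2 ^ j)
    by (eapply Rle_trans; [apply INR_le_pow2 | apply Rle_pow; [lra | exact Hj]]).
  pose proof PI_RGT_0. split; [apply Rlt_le, Rdiv_lt_0_compat; lra|].
  apply (Rmult_le_reg_r (2 ^ j)); auto. unfold Rdiv. rewrite Rmult_assoc, Rinv_l by lra. nra.
Qed.

Lemma c1norm_comp_op_sub_waves psi dpsi K z j k x : (forall x, in01 x -> in01 (psi x)) ->
  (forall x, in01 x -> has_deriv01 psi x (dpsi x)) -> (forall x, in01 x -> cont01 dpsi x) ->
  linear_C1 K -> (j < k)%nat -> in01 x -> Rabs (psi x - z) = PI / 2 ^ j ->
  Rabs (dpsi x) / 2 - c1norm (fun y => K (wave z k) y - K (wave z j) y)
    <= c1norm (op_sub (comp_op psi) K (fun y => wave z k y - wave z j y)).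
Proof.
  intros Hm Hd Hc HK Hjk Hx Hdist. pose proof HK as [HKC1 _].
  set (v := fun y => wave z k y - wave z j y).
  set (D := fun y => K (wave z k) y - K (wave z j) y).
  assert (HD : isC1 D) by (apply isC1_sub; apply HKC1, isC1_wave).
  pose proof HD as [dD [HdD _]].
  assert (Hderiv : has_deriv01 (op_sub (comp_op psi) K v) x
                     ((dwave z k (psi x) - dwave z j (psi x)) * dpsi x - dD x)).
  { apply (has_deriv01_ext (fun y => v (psi y) - D y)); auto.
    - intros y Hy. unfold op_sub, comp_op, D, v. rewrite linear_C1_sub; auto using isC1_wave.
    - apply has_deriv01_sub; auto. apply has_deriv01_comp; auto.
      apply has_deriv01_sub; auto; apply has_deriv01_of_is_derive, is_derive_wave. }
  assert (HW : isC1 (op_sub (comp_op psi) K v)).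
  { assert (Hv : isC1 v) by (apply isC1_sub; apply isC1_wave).
    unfold op_sub, comp_op. apply isC1_sub; [apply isC1_comp | apply HKC1]; auto.
    exists dpsi; auto. }
  eapply Rle_trans; [|apply (c1norm_ge_deriv _ x _ HW Hx Hderiv)].
  pose proof (c1norm_ge_deriv D x _ HD Hx (HdD x Hx)).
  destruct (dwave_opposite z j k (psi x) Hjk Hdist) as [-> ->].
  split_Rabs; lra.
Qed.

(** Compactness makes [K] almost cancel on the difference of two fast waves, while [C_psi]
    keeps a derivative of size [|psi'| / 2] where the two waves have opposite slopes. *)
Lemma ess_norm_comp_op_ge psi dpsi xi : (forall x, in01 x -> in01 (psi x)) ->
  (forall x, in01 x -> has_deriv01 psi x (dpsi x)) -> (forall x, in01 x -> cont01 dpsi x) ->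
  in01 xi -> Rabs (dpsi xi) / 8 <= ess_norm (comp_op psi).
Proof.
  intros Hm Hd Hc Hxi. set (d := Rabs (dpsi xi)).
  destruct (Req_dec (dpsi xi) 0) as [H0|Hnz].
  { unfold d. rewrite H0, Rabs_R0. pose proof (ess_norm_nonneg (comp_op psi)). lra. }
  assert (Hdpos : 0 < d) by (apply Rabs_pos_lt; exact Hnz).
  destruct (image_interval_large_deriv psi dpsi xi Hd Hc Hxi Hnz) as [L [HL Himg]].
  destruct (PI_div_pow2_le L HL) as [J HJ].
  set (z := psi xi) in *.
  assert (Hw : forall k, isC1 (wave z k) /\ c1norm (wave z k) <= 1)
    by (intros k; split; [apply isC1_wave | pose proof (c1norm_wave z k); lra]).
  apply ess_norm_ge. intros K HK.
  destruct (comp_op_sub_compact_bounded psi K Hm (ex_intro _ dpsi (conj Hd Hc)) HK) as [B HB].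
  destruct (compact_op_close_pair K (wave z) HK Hw (d / 8) J) as [j [k [[HJj Hjk] Hclose]]]; [lra|].
  destruct (Himg _ (HJ j HJj)) as [x [Hx [Hdist Hbig]]].
  assert (Hv : isC1 (fun y => wave z k y - wave z j y)) by (apply isC1_sub; apply isC1_wave).
  assert (Hv1 : c1norm (fun y => wave z k y - wave z j y) <= 1).
  { eapply Rle_trans; [apply (c1norm_sub_le _ (wave z k) (wave z j)); auto using isC1_wave|].
    pose proof (c1norm_wave z k); pose proof (c1norm_wave z j). lra. }
  eapply Rle_trans; [|apply (opnorm_ge _ _ _ HB Hv Hv1)].
  pose proof (c1norm_comp_op_sub_waves psi dpsi K z j k x Hm Hd Hc (proj1 HK) Hjk Hx Hdist).
  unfold d in *. lra.
Qed.

(** * Geometric rates of n-th roots *)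

Lemma nroot_nonneg x n : 0 <= nroot x n.
Proof. unfold nroot. destruct Rlt_dec; [apply Rlt_le, exp_pos | lra]. Qed.

Lemma nroot_le a b n : (1 <= n)%nat -> 0 <= a <= b -> nroot a n <= nroot b n.
Proof.
  intros Hn Hab. unfold nroot at 1. destruct (Rlt_dec 0 a) as [Ha|]; [|apply nroot_nonneg].
  unfold nroot. destruct (Rlt_dec 0 b); [|lra].
  apply Rle_Rpower_l; [apply Rlt_le, Rinv_0_lt_compat, lt_0_INR; lia | lra].
Qed.

Lemma Rpower_pow_inv e n : 0 < e -> (1 <= n)%nat -> Rpower (e ^ n) (/ INR n) = e.
Proof.
  intros He Hn. rewrite <- Rpower_pow, Rpower_mult, Rinv_r by (auto; apply not_0_INR; lia).
  apply Rpower_1; auto.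
Qed.

Lemma nroot_mul_pow C e n : 0 < C -> 0 < e -> (1 <= n)%nat ->
  nroot (C * e ^ n) n = Rpower C (/ INR n) * e.
Proof.
  intros HC He Hn. assert (Hen : 0 < e ^ n) by (apply pow_lt; auto).
  unfold nroot. destruct Rlt_dec as [_|H]; [|destruct H; apply Rmult_lt_0_compat; auto].
  rewrite <- Rpower_mult_distr, Rpower_pow_inv; auto.
Qed.

Lemma Rpower_inv_INR_le C b n : 0 < b -> 0 < C <= b ^ n -> (1 <= n)%nat -> Rpower C (/ INR n) <= b.
Proof.
  intros Hb HC Hn. rewrite <- (Rpower_pow_inv b n Hb Hn).
  apply Rle_Rpower_l; [apply Rlt_le, Rinv_0_lt_compat, lt_0_INR; lia | lra].
Qed.

Lemma Rpower_inv_INR_ge a n : 0 < a <= 1 -> (1 <= n)%nat -> a <= Rpower a (/ INR n).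
Proof.
  intros Ha Hn. unfold Rpower. rewrite <- (exp_ln a) at 1 by lra.
  assert (ln a <= 0) by (rewrite <- ln_1; apply ln_le; lra).
  assert (0 < / INR n <= 1).
  { split; [apply Rinv_0_lt_compat, lt_0_INR; lia|].
    rewrite <- Rinv_1. apply Rinv_le_contravar; [lra|]. apply (le_INR 1); exact Hn. }
  destruct (Req_dec (ln a) (/ INR n * ln a)) as [E|Hne]; [rewrite <- E; lra|].
  apply Rlt_le, exp_increasing. nra.
Qed.

Lemma is_lim_nroot_0 (e : nat -> R) : (forall n, 0 <= e n) ->
  (forall eps, 0 < eps -> exists C N, 0 < C /\ forall n, (N <= n)%nat -> e n <= C * eps ^ n) ->
  is_lim_seq (fun n => nroot (e n) n) 0.
Proof.
  intros H0 H. apply is_lim_seq_spec. intros eps. pose proof (cond_pos eps) as Heps.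
  destruct (H (eps / 4)) as [C [N [HC HN]]]; [lra|].
  destruct (INR_archimed 1 C) as [N2 HN2]; [lra|].
  exists (N + N2 + 1)%nat. intros n Hn. rewrite Rminus_0_r, Rabs_pos_eq by apply nroot_nonneg.
  assert (Hn1 : (1 <= n)%nat) by lia. assert (Hp : 0 < eps / 4) by lra.
  eapply Rle_lt_trans; [apply (nroot_le _ (C * (eps / 4) ^ n)); auto; split; auto; apply HN; lia|].
  rewrite nroot_mul_pow by auto.
  assert (Rpower C (/ INR n) <= 2).
  { apply Rpower_inv_INR_le; auto; [lra|]. split; auto.
    pose proof (INR_le_pow2 n). assert (INR N2 <= INR n) by (apply le_INR; lia). lra. }
  nra.
Qed.

Lemma not_is_lim_nroot_0 (e : nat -> R) a c : 0 < a <= 1 -> 0 < c ->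
  (forall n, (1 <= n)%nat -> a * c ^ n <= e n) -> ~ is_lim_seq (fun n => nroot (e n) n) 0.
Proof.
  intros Ha Hc H Hlim. apply is_lim_seq_spec in Hlim.
  assert (Hac : 0 < a * c) by nra.
  destruct (Hlim (mkposreal _ Hac)) as [N HN]. simpl in HN.
  specialize (HN (N + 1)%nat ltac:(lia)).
  rewrite Rminus_0_r, Rabs_pos_eq in HN by apply nroot_nonneg.
  set (n := (N + 1)%nat) in *. assert (Hn : (1 <= n)%nat) by (unfold n; lia).
  assert (Hcn : 0 < c ^ n) by (apply pow_lt; lra).
  assert (nroot (a * c ^ n) n <= nroot (e n) n) by (apply nroot_le; auto; split; [nra | auto]).
  rewrite nroot_mul_pow in H0 by (auto; lra).
  pose proof (Rpower_inv_INR_ge a n Ha Hn). nra.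
Qed.

(** * Iterates of [phi] *)

Fixpoint deriv_iter (phi dphi : R -> R) (n : nat) (x : R) : R :=
  match n with O => 1 | S m => dphi (Nat.iter m phi x) * deriv_iter phi dphi m x end.

Section Iterates.

Variables phi dphi : R -> R.
Hypothesis phi_in01 : forall x, in01 x -> in01 (phi x).
Hypothesis phi_deriv : forall x, in01 x -> has_deriv01 phi x (dphi x).
Hypothesis dphi_cont : forall x, in01 x -> cont01 dphi x.

Lemma iter_in01 n x : in01 x -> in01 (Nat.iter n phi x).
Proof. intros Hx. induction n; simpl; auto. Qed.

Lemma has_deriv01_iter n x : in01 x -> has_deriv01 (Nat.iter n phi) x (deriv_iter phi dphi n x).
Proof.
  revert x. induction n as [|n IH]; intros x Hx; simpl.
  - change (has_deriv01 (fun y => y) x 1). apply has_deriv01_of_is_derive. auto_derive; auto.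
  - apply (has_deriv01_comp (Nat.iter n phi) phi); auto using iter_in01.
Qed.

Lemma cont01_deriv_iter n x : in01 x -> cont01 (deriv_iter phi dphi n) x.
Proof.
  revert x. induction n as [|n IH]; intros x Hx; simpl; [apply cont01_const|].
  apply cont01_mult; auto. apply cont01_comp; auto using iter_in01.
  apply (has_deriv01_cont01 _ _ _ Hx (has_deriv01_iter n x Hx)).
Qed.

Lemma ess_norm_pow_le n B : (forall x, in01 x -> Rabs (deriv_iter phi dphi n x) <= B) ->
  ess_norm (op_pow (comp_op phi) n) <= 2 * B.
Proof.
  intros HB. rewrite op_pow_comp_op.
  apply (ess_norm_comp_op_le _ (deriv_iter phi dphi n)); auto using iter_in01, has_deriv01_iter.
  pose proof (Rabs_pos (deriv_iter phi dphi n 0)). pose proof (HB 0 ltac:(unfold in01; lra)). lra.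
Qed.

Lemma ess_norm_pow_ge n xi : in01 xi ->
  Rabs (deriv_iter phi dphi n xi) / 8 <= ess_norm (op_pow (comp_op phi) n).
Proof.
  intros Hxi. rewrite op_pow_comp_op.
  apply ess_norm_comp_op_ge; auto using iter_in01, has_deriv01_iter, cont01_deriv_iter.
Qed.

Definition in_image_iter (n : nat) (y : R) : Prop := exists x, in01 x /\ y = Nat.iter n phi x.

Definition in_iter_images (y : R) : Prop := forall n, in_image_iter n y.

Lemma in_image_iter_antitone n m y : (n <= m)%nat -> in_image_iter m y -> in_image_iter n y.
Proof.
  intros Hnm [x [Hx ->]]. exists (Nat.iter (m - n) phi x). split; [apply iter_in01; auto|].
  rewrite <- Nat.iter_add. f_equal. lia.
Qed.

Lemma in_iter_images_either p q : (forall n, in_image_iter n p \/ in_image_iter n q) ->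
  in_iter_images p \/ in_iter_images q.
Proof.
  intros H. destruct (classic (in_iter_images p)) as [|Hp]; [left; auto|right].
  apply not_all_ex_not in Hp as [n0 Hn0]. intros n.
  destruct (H (n + n0)%nat) as [Hpn|Hqn].
  - destruct Hn0. apply (in_image_iter_antitone _ (n + n0)); auto; lia.
  - apply (in_image_iter_antitone _ (n + n0)); auto; lia.
Qed.

Lemma iter_fixed x n : phi x = x -> Nat.iter n phi x = x.
Proof. intros H. induction n; simpl; auto. rewrite IHn; auto. Qed.

Lemma deriv_iter_fixed x n : phi x = x -> deriv_iter phi dphi n x = dphi x ^ n.
Proof. intros H. induction n; simpl; auto. rewrite IHn, iter_fixed; auto. Qed.

(** Were the convergence not uniform, every image [phi_n([0,1])], an interval through [x0],
    would contain [x0 + eta/2] or [x0 - eta/2]; the images being nested, one of these two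
    points would lie in all of them. *)
Lemma iter_unif_cv x0 : (forall y, in_iter_images y <-> y = x0) ->
  forall eta, 0 < eta -> exists N, forall m x, (N <= m)%nat -> in01 x ->
    Rabs (Nat.iter m phi x - x0) < eta.
Proof.
  intros Hcore eta Heta. apply NNPP. intros Hn.
  assert (Hside : forall n, in_image_iter n (x0 + eta / 2) \/ in_image_iter n (x0 - eta / 2)).
  { intros n. apply not_ex_all_not with (n := n) in Hn.
    apply not_all_ex_not in Hn as [m Hm]. apply not_all_ex_not in Hm as [x Hm].
    apply imply_to_and in Hm as [Hnm Hm]. apply imply_to_and in Hm as [Hx Hfar].
    apply Rnot_lt_le in Hfar.
    destruct (proj2 (Hcore x0) eq_refl m) as [x' [Hx' Hx'e]].
    assert (Hcont : forall y, in01 y -> cont01 (Nat.iter m phi) y)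
      by (intros y Hy; exact (has_deriv01_cont01 _ _ _ Hy (has_deriv01_iter m y Hy))).
    assert (Hin : forall t, Rmin x0 (Nat.iter m phi x) <= t <= Rmax x0 (Nat.iter m phi x) ->
                            in_image_iter n t).
    { intros t Ht. rewrite Hx'e in Ht.
      destruct (intermediate_value01 _ x' x t Hcont Hx' Hx Ht) as [c [Hc [_ Hct]]].
      apply (in_image_iter_antitone _ m); auto. exists c; auto. }
    unfold Rmin, Rmax in Hin. destruct Rle_dec; [left | right]; apply Hin; split_Rabs; lra. }
  destruct (in_iter_images_either _ _ Hside) as [Hp|Hq];
    [apply Hcore in Hp | apply Hcore in Hq]; lra.
Qed.

Lemma deriv_iter_le_pow G n x : (forall y, in01 y -> Rabs (dphi y) <= G) -> in01 x ->
  Rabs (deriv_iter phi dphi n x) <= G ^ n.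
Proof.
  intros HG Hx. induction n; simpl; [rewrite Rabs_R1; lra|].
  rewrite Rabs_mult. apply Rmult_le_compat; auto using Rabs_pos, iter_in01.
Qed.

Lemma deriv_iter_tail_le G N e m x : (forall y, in01 y -> Rabs (dphi y) <= G) ->
  (forall k y, (N <= k)%nat -> in01 y -> Rabs (dphi (Nat.iter k phi y)) <= e) -> in01 x ->
  Rabs (deriv_iter phi dphi (N + m) x) <= G ^ N * e ^ m.
Proof.
  intros HG He Hx. induction m.
  - rewrite Nat.add_0_r, pow_O, Rmult_1_r. apply deriv_iter_le_pow; auto.
  - rewrite Nat.add_succ_r. simpl. rewrite Rabs_mult.
    replace (G ^ N * (e * e ^ m)) with (e * (G ^ N * e ^ m)) by ring.
    apply Rmult_le_compat; [apply Rabs_pos | apply Rabs_pos | apply He; auto; lia | exact IHm].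
Qed.

Lemma ess_norm_pow_superexp x0 : in01 x0 -> (forall y, in_iter_images y <-> y = x0) ->
  dphi x0 = 0 ->
  forall eps, 0 < eps -> exists C N, 0 < C /\
    forall n, (N <= n)%nat -> ess_norm (op_pow (comp_op phi) n) <= C * eps ^ n.
Proof.
  intros Hx0 Hcore H0 eps Heps.
  destruct (dphi_cont x0 Hx0 eps Heps) as [eta [Heta Hnear]].
  destruct (iter_unif_cv x0 Hcore eta Heta) as [N HN].
  destruct (cont01_bounded dphi dphi_cont) as [G0 [HG0 HG]].
  set (G := G0 + 1).
  assert (HG' : forall y, in01 y -> Rabs (dphi y) <= G)
    by (intros y Hy; specialize (HG y Hy); unfold G; lra).
  assert (Htail : forall k y, (N <= k)%nat -> in01 y -> Rabs (dphi (Nat.iter k phi y)) <= eps).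
  { intros k y Hk Hy. specialize (Hnear _ (iter_in01 k y Hy) (HN k y Hk Hy)).
    rewrite H0, Rminus_0_r in Hnear. lra. }
  exists (2 * (G / eps) ^ N), N. split.
  { apply Rmult_lt_0_compat; [lra|]. apply pow_lt, Rdiv_lt_0_compat; unfold G; lra. }
  intros n Hn. replace n with (N + (n - N))%nat by lia.
  eapply Rle_trans; [apply ess_norm_pow_le; intros x Hx; apply (deriv_iter_tail_le G); eauto|].
  right. rewrite pow_add. unfold Rdiv. rewrite Rpow_mult_distr, pow_inv. field.
  apply pow_nonzero; lra.
Qed.

(** The mean value theorem for [phi_n] between a fixed point and a preimage of [y]. *)
Lemma deriv_iter_ge_dist xs y n : in01 xs -> phi xs = xs -> in_iter_images y ->
  exists xi, in01 xi /\ Rabs (y - xs) <= Rabs (deriv_iter phi dphi n xi).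
Proof.
  intros Hxs Hfix Hy. destruct (Hy n) as [u [Hu ->]].
  destruct (mean_value01 _ _ xs u (has_deriv01_iter n) Hxs Hu) as [c [Hc [_ Hmv]]].
  exists c. split; auto. rewrite (iter_fixed xs n Hfix) in Hmv. rewrite Hmv, Rabs_mult.
  assert (Rabs (u - xs) <= 1) by (unfold in01 in *; split_Rabs; lra).
  pose proof (Rabs_pos (deriv_iter phi dphi n c)). pose proof (Rabs_pos (u - xs)). nra.
Qed.

Lemma deriv_iter_exp_lower :
  ~ (exists x0, in01 x0 /\ (forall y, in_iter_images y <-> y = x0) /\ dphi x0 = 0) ->
  exists c, 0 < c /\ forall n, (1 <= n)%nat ->
    exists xi, in01 xi /\ c ^ n <= Rabs (deriv_iter phi dphi n xi).
Proof.
  intros Hnot. destruct (fixed_point01 phi phi_in01) as [xs [Hxs Hfix]].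
  { intros x Hx. exact (has_deriv01_cont01 _ _ _ Hx (phi_deriv x Hx)). }
  destruct (Req_dec (dphi xs) 0) as [H0|Hnz].
  - assert (Hy : exists y, in_iter_images y /\ y <> xs).
    { apply NNPP. intros Hno. apply Hnot. exists xs. split; [exact Hxs|]. split; [|exact H0].
      intros y; split.
      - intros Hy. apply NNPP. intros Hne. apply Hno. eauto.
      - intros -> n. exists xs. split; auto. symmetry; apply iter_fixed; auto. }
    destruct Hy as [y [Hy Hne]].
    assert (Hy01 : in01 y) by (destruct (Hy O) as [x [Hx ->]]; exact Hx).
    assert (Hc : 0 < Rabs (y - xs) <= 1)
      by (split; [apply Rabs_pos_lt; lra | unfold in01 in *; split_Rabs; lra]).
    exists (Rabs (y - xs)). split; [lra|]. intros n Hn.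
    destruct (deriv_iter_ge_dist xs y n Hxs Hfix Hy) as [xi [Hxi Hle]].
    exists xi. split; auto. eapply Rle_trans; [|exact Hle].
    destruct n as [|n]; [lia|]. simpl.
    pose proof (pow_incr (Rabs (y - xs)) 1 n ltac:(lra)) as Hpow. rewrite pow1 in Hpow.
    pose proof (pow_le (Rabs (y - xs)) n ltac:(lra)). nra.
  - exists (Rabs (dphi xs)). split; [apply Rabs_pos_lt; auto|]. intros n _. exists xs. split; auto.
    rewrite deriv_iter_fixed, RPow_abs by auto. lra.
Qed.

End Iterates.

Theorem theorem3p1 (phi : R -> R)
  (Hmap : forall x, in01 x -> in01 (phi x))
  (HC1 : isC1 phi) :
  Riesz (comp_op phi) <->
  exists x0, in01 x0 /\
    (forall y, (forall n : nat, exists x, in01 x /\ y = Nat.iter n phi x) <-> y = x0) /\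
    has_deriv01 phi x0 0.
Proof.
  destruct HC1 as [dphi [Hd Hc]]. unfold Riesz.
  assert (Hcrit : forall x0, in01 x0 -> has_deriv01 phi x0 0 <-> dphi x0 = 0).
  { intros x0 Hx0. split.
    - intros H. symmetry. exact (has_deriv01_unique _ _ _ _ Hx0 H (Hd x0 Hx0)).
    - intros <-. auto. }
  split.
  - intros HR. apply NNPP. intros Hn.
    destruct (deriv_iter_exp_lower phi dphi Hmap Hd) as [c [Hc0 Hlow]].
    { intros [x0 [Hx0 [Hcore H0]]]. apply Hn. exists x0. rewrite Hcrit; auto. }
    revert HR. apply (not_is_lim_nroot_0 _ (/ 8) c); [lra | exact Hc0 |].
    intros n Hn1. destruct (Hlow n Hn1) as [xi [Hxi Hxin]].
    pose proof (ess_norm_pow_ge phi dphi Hmap Hd Hc n xi Hxi). lra.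
  - intros [x0 [Hx0 [Hcore H0]]]. apply is_lim_nroot_0; [intros; apply ess_norm_nonneg|].
    apply (ess_norm_pow_superexp phi dphi Hmap Hd Hc x0 Hx0 Hcore). apply Hcrit; auto.
Qed.
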